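(* Let $K\subseteq L$ be an algebraic field extension, let $A$ be a PvMD with quotient field $K$, and let $B\supseteq A$ be an integrally closed essential domain with quotient field $L$. Suppose that $B$ admits an essential representation $\mathcal V$ such that for every $V\in\mathcal V$ the center $\mathfrak m_V\cap A$ of $V$ in $A$ (where $\mathfrak m_V$ is the maximal ideal of $V$) is a $t$-ideal of $A$. Then $B$ is a PvMD.
   Context: All rings are commutative with identity. For an integral domain $D$ with quotient field $F$ and nonzero fractional ideal $I$: $(D:I)=\{x\in F:xI\subseteq D\}$, $I^v=(D:(D:I))$, $I^t=\bigcup\{J^v:J\subseteq I \text{ finitely generated}\}$; $I$ is a $t$-ideal if $I=(0)$ or $I=I^t$; $t$-maximal ideals are $t$-ideals maximal among proper $t$-ideals. $D$ is a PvMD if $D_{\mathfrak m}$ is a valuation domain for all $t$-maximal $\mathfrak m$. A valuation overring of $D$ is essential if it equals $D_{\mathfrak p}$ for a prime $\mathfrak p$ of $D$; an essential representation of $D$ is a family of essential valuation overrings with intersection $D$; $D$ is essential if it has one. *)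

(* Integral domains are modelled as subrings of a field L
   (predicates L -> Prop); the quotient field of D is the set of fractions
   a/b (a, b in D, b <> 0) inside L. *)
From HB Require Import structures.
From mathcomp Require Import all_boot all_algebra.
Set Implicit Arguments. Unset Strict Implicit. Unset Printing Implicit Defensive.
Import GRing.Theory.
Local Open Scope ring_scope.

Section Defs.
Variable L : fieldType.
Implicit Types (D V I J P M N K : L -> Prop).

Definition subring D :=
  D 0 /\ D 1 /\ (forall x y, D x -> D y -> D (x - y)) /\
  (forall x y, D x -> D y -> D (x * y)).

Definition qf D (x : L) := exists a b, D a /\ D b /\ b != 0 /\ x = a / b.

Definition ideal D I :=
  (forall x, I x -> D x) /\ I 0 /\ (forall x y, I x -> I y -> I (x + y)) /\
  (forall d x, D d -> I x -> I (d * x)).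

Definition proper_ideal D I := ideal D I /\ ~ I 1.

Definition prime_ideal D P :=
  proper_ideal D P /\ forall x y, D x -> D y -> P (x * y) -> P x \/ P y.

Definition fg_ideal D (s : seq L) (x : L) :=
  exists c : seq L, size c = size s /\ (forall i, D c`_i) /\
    x = \sum_(i < size s) c`_i * s`_i.

Definition colon D I (x : L) := qf D x /\ forall y, I y -> D (x * y).

Definition vclosure D I := colon D (colon D I).

Definition tclosure D I (x : L) :=
  exists s : seq L, (forall y, y \in s -> I y) /\ vclosure D (fg_ideal D s) x.

Definition t_ideal D I :=
  (forall x, I x <-> x = 0) \/ (forall x, I x <-> tclosure D I x).

Definition t_maximal D M :=
  proper_ideal D M /\ t_ideal D M /\
  forall N, proper_ideal D N -> t_ideal D N ->
    (forall x, M x -> N x) -> forall x, N x -> M x.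

Definition localization D P (x : L) :=
  exists a s, D a /\ D s /\ ~ P s /\ x = a / s.

Definition valuation_in (F V : L -> Prop) :=
  forall x, F x -> x != 0 -> V x \/ V x^-1.

Definition PvMD D :=
  subring D /\ forall M, t_maximal D M -> valuation_in (qf D) (localization D M).

Definition valuation_overring D V :=
  subring V /\ (forall x, D x -> V x) /\ (forall x, V x -> qf D x) /\
  valuation_in (qf D) V.

Definition essential_valuation_overring D V :=
  valuation_overring D V /\
  exists P, prime_ideal D P /\ forall x, V x <-> localization D P x.

(* intersection taken inside the quotient field (empty family gives qf D) *)
Definition essential_representation D (Vs : (L -> Prop) -> Prop) :=
  (forall V, Vs V -> essential_valuation_overring D V) /\
  forall x, D x <-> (qf D x /\ forall V, Vs V -> V x).

Definition essential_domain D :=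
  subring D /\ exists Vs, essential_representation D Vs.

Definition integrally_closed D :=
  forall x, qf D x ->
    (exists p : {poly L}, p \is monic /\ (forall i, D p`_i) /\ root p x) -> D x.

Definition val_max_ideal V (x : L) := V x /\ (x = 0 \/ ~ V x^-1).

Definition algebraic_over K :=
  forall x : L, exists p : {poly L}, p != 0 /\ (forall i, K p`_i) /\ root p x.

End Defs.

(* Let M be a t-maximal ideal of B and suppose x, 1/x are both outside B_M.  Pick q in A[X],
   q <> 0, with q(x) = 0.  As A is a PvMD, c(q)(A : c(q)) is t-invertible, so finitely many w
   in (A : c(q)) satisfy (w q_j)_v = A.  For each such w, the tails t_j = sum_(i >= j) w q_i x^(i-j)
   lie in every valuation ring of the representation (directly if x is in it, otherwise because
   w q(x) = 0 turns t_j into a polynomial in 1/x), hence in B, and so do the x t_j; as x and 1/x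
   are not in B_M, all of them lie in M.  If u multiplies every t_j and x t_j into B, it
   multiplies every w q_j = t_j - x t_(j+1) into B.  For V in the representation the center
   m_V ∩ A is a proper t-ideal, hence misses some w q_j, which is then a unit of V, so u is in V.
   Thus 1 lies in the v-closure of finitely many elements of M, contradicting M = M_t. *)

From mathcomp Require Import all_boot all_algebra.
From mathcomp Require Import boolp classical_sets.
From mathcomp Require Import ring.
Set Implicit Arguments. Unset Strict Implicit. Unset Printing Implicit Defensive.
Import GRing.Theory.
Local Open Scope ring_scope.

Section Subring.
Variables (L : fieldType) (D : L -> Prop).
Hypothesis hD : subring D.

Lemma subring0 : D 0. Proof. by case: hD. Qed.
Lemma subring1 : D 1. Proof. by case: hD => _ []. Qed.
Lemma subringB x y : D x -> D y -> D (x - y).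
Proof. by case: hD => _ [_ [+ _]]; apply. Qed.
Lemma subringM x y : D x -> D y -> D (x * y).
Proof. by case: hD => _ [_ [_]]; apply. Qed.
Lemma subringN x : D x -> D (- x).
Proof. by move=> Dx; rewrite -sub0r; apply: subringB => //; apply: subring0. Qed.
Lemma subringD x y : D x -> D y -> D (x + y).
Proof. by move=> Dx Dy; rewrite -[y]opprK; apply/subringB/subringN. Qed.
Lemma subringX x n : D x -> D (x ^+ n).
Proof.
by move=> Dx; elim: n => [|n IH]; rewrite ?expr0 ?exprS; [apply: subring1 | apply: subringM].
Qed.
Lemma subring_sum (I : Type) (r : seq I) (P : pred I) (F : I -> L) :
  (forall i, P i -> D (F i)) -> D (\sum_(i <- r | P i) F i).
Proof. by move=> DF; apply: big_ind => //; [apply: subring0 | apply: subringD]. Qed.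

Lemma horner_subring (p : {poly L}) x : (forall i, D p`_i) -> D x -> D p.[x].
Proof.
move=> Dp Dx; rewrite horner_coef; apply: subring_sum => i _.
by apply: subringM => //; apply: subringX.
Qed.

Lemma qf_subring x : D x -> qf D x.
Proof. by move=> Dx; exists x, 1; rewrite divr1 oner_neq0; do !split=> //; apply: subring1. Qed.

Lemma qf_div a b : D a -> D b -> qf D (a / b).
Proof.
move=> Da Db; have [->|b0] := eqVneq b 0; last by exists a, b.
by rewrite invr0 mulr0; apply/qf_subring/subring0.
Qed.

Lemma qfD x y : qf D x -> qf D y -> qf D (x + y).
Proof.
move=> [a [b [Da [Db [b0 ->]]]]] [c [d [Dc [Dd [d0 ->]]]]].
have -> : a / b + c / d = (a * d + c * b) / (b * d) by field; apply/andP.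
by apply: qf_div; [apply: subringD; apply: subringM | apply: subringM].
Qed.

Lemma qfM x y : qf D x -> qf D y -> qf D (x * y).
Proof.
move=> [a [b [Da [Db [b0 ->]]]]] [c [d [Dc [Dd [d0 ->]]]]].
rewrite mulrACA -invfM; exact/qf_div/subringM/Dd/Db/subringM.
Qed.

Lemma fg_ideal_mem s y : y \in s -> fg_ideal D s y.
Proof.
move=> ys; have ks : (index y s < size s)%N by rewrite index_mem.
exists (mkseq (fun i => (i == index y s)%:R) (size s)); rewrite size_mkseq.
split=> //; split.
  move=> i; have [lt_is|le_si] := ltnP i (size s); last first.
    by rewrite nth_default ?size_mkseq //; apply: subring0.
  by rewrite nth_mkseq //; case: eqP => _; [apply: subring1 | apply: subring0].
rewrite (bigD1 (Ordinal ks)) //= nth_mkseq // eqxx mul1r nth_index // big1 ?addr0 //.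
move=> i ne_i; rewrite nth_mkseq //; case: eqP => [eq_i | _]; last by rewrite mul0r.
by move: ne_i; rewrite -val_eqE /= eq_i eqxx.
Qed.

Lemma colon_fgE s u :
  colon D (fg_ideal D s) u <-> qf D u /\ forall y, y \in s -> D (u * y).
Proof.
split=> [[qu Du] | [qu Du]]; first by split=> // y /fg_ideal_mem; apply: Du.
split=> // _ [c [_ [Dc ->]]]; rewrite mulr_sumr; apply: subring_sum => i _.
by rewrite mulrCA; apply: subringM => //; apply/Du/mem_nth.
Qed.

Definition vspan s := vclosure D (fg_ideal D s).

Lemma vspan_mem s z : z \in s -> D z -> vspan s z.
Proof.
move=> zs Dz; split; first exact: qf_subring.
by move=> u [_ Du]; rewrite mulrC; apply/Du/fg_ideal_mem.
Qed.

Lemma vspan_sub s s' z : {subset s <= s'} -> vspan s z -> vspan s' z.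
Proof.
move=> ss' [qz Dz]; split=> // u /colon_fgE [qu Du]; apply: Dz.
by apply/colon_fgE; split=> // y /ss'; apply: Du.
Qed.

Lemma vspan_trans s s' z : (forall y, y \in s -> vspan s' y) -> vspan s z -> vspan s' z.
Proof.
move=> ss' [qz Dz]; split=> // u s'u; apply: Dz; apply/colon_fgE.
by split=> [|y /ss' [_ Dy]]; [case: s'u | rewrite mulrC; apply: Dy].
Qed.

Lemma vspan0 s : vspan s 0.
Proof. by split=> [|u _]; rewrite ?mul0r; [apply/qf_subring | ]; apply: subring0. Qed.

Lemma vspanD s y z : vspan s y -> vspan s z -> vspan s (y + z).
Proof.
move=> [qy Dy] [qz Dz]; split; first exact: qfD.
by move=> u su; rewrite mulrDl; apply: subringD; [apply: Dy | apply: Dz].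
Qed.

Lemma vspanM s d y : D d -> vspan s y -> vspan s (d * y).
Proof.
move=> Dd [qy Dy]; split; first exact/qfM/qy/qf_subring.
by move=> u su; rewrite -mulrA; apply/subringM/Dy.
Qed.

Lemma vspan_subring s y : (forall z, z \in s -> D z) -> vspan s y -> D y.
Proof.
move=> Ds [_ Dy]; rewrite -[y]mulr1; apply: Dy; apply/colon_fgE.
by split=> [|z zs]; rewrite ?mul1r; [apply/qf_subring/subring1 | apply: Ds].
Qed.

Lemma vspan_allpairs1 s1 s2 :
  (forall z, z \in s2 -> D z) ->
  vspan s1 1 -> vspan s2 1 -> vspan [seq a * b | a <- s1, b <- s2] 1.
Proof.
move=> Ds2 [_ v1] [q1 v2]; split=> // u /colon_fgE [qu Du].
rewrite mul1r -[u]mul1r; apply: v2; apply/colon_fgE; split=> // b bs2.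
rewrite -[_ * b]mul1r; apply: v1; apply/colon_fgE.
split=> [|a as1]; first exact/qfM/qf_subring/Ds2.
by rewrite -mulrA [b * a]mulrC; apply/Du/allpairsP; exists (a, b).
Qed.

End Subring.

Section TMaximal.
Variables (L : fieldType) (D : L -> Prop).
Hypothesis hD : subring D.

Definition adjoin (N : L -> Prop) z y := exists n d, N n /\ D d /\ y = n + d * z.

Definition t_proper J := ideal D J /\ ~ tclosure D J 1.

Lemma adjoin_l N z y : N y -> adjoin N z y.
Proof. by exists y, 0; rewrite mul0r addr0; do !split=> //; apply: (subring0 hD). Qed.

Lemma adjoin_r N z : N 0 -> adjoin N z z.
Proof. by exists 0, 1; rewrite add0r mul1r; do !split=> //; apply: (subring1 hD). Qed.

Lemma ideal_adjoin N z : ideal D N -> D z -> ideal D (adjoin N z).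
Proof.
move=> [DN [N0 [ND NM]]] Dz; split.
  by move=> _ [n [d [Nn [Dd ->]]]]; apply: (subringD hD); [apply: DN | apply: (subringM hD)].
split; first exact: adjoin_l.
split=> [_ _ [n [d [Nn [Dd ->]]]] [n' [d' [Nn' [Dd' ->]]]] | c _ Dc [n [d [Nn [Dd ->]]]]].
  by exists (n + n'), (d + d'); do !split; [apply: ND | apply: (subringD hD) | ring].
by exists (c * n), (c * d); do !split; [apply: NM | apply: (subringM hD) | ring].
Qed.

Lemma tclosure_mem N z : ideal D N -> N z -> tclosure D N z.
Proof.
move=> [DN _] Nz; exists [:: z]; split; first by move=> y /[1!inE] /eqP->.
by apply: (vspan_mem hD); [apply: mem_head | apply: DN].
Qed.

Lemma tclosure_subring N z : ideal D N -> tclosure D N z -> D z.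
Proof. by move=> [DN _] [s [sN vz]]; apply: (vspan_subring hD) vz => y /sN /DN. Qed.

Lemma tclosure_adjoin N z y :
  ideal D N -> tclosure D N z -> tclosure D (adjoin N z) y -> tclosure D N y.
Proof.
move=> [DN _] [s0 [s0N vz]] [s [sNz vy]].
have [f Hf] : {f : L -> L * L & forall y', y' \in s ->
    N (f y').1 /\ D (f y').2 /\ y' = (f y').1 + (f y').2 * z}.
  apply: (@choice _ _ (fun y' nd => y' \in s -> N nd.1 /\ D nd.2 /\ y' = nd.1 + nd.2 * z)).
  move=> y'; have [y's|y'Ns] := boolP (y' \in s); last by exists (0, 0).
  by have [n [d ndz]] := sNz y' y's; exists (n, d).
exists (s0 ++ [seq (f y').1 | y' <- s]); split.
  by move=> w /[1!mem_cat] /orP[/s0N // | /mapP[y' /Hf[Ny _] ->]].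
apply: (vspan_trans hD) vy => y' y's; have [Ny [Dd ->]] := Hf y' y's.
apply: (vspanD hD).
  apply: (vspan_mem hD); last exact: DN.
  by rewrite mem_cat; apply/orP; right; apply/mapP; exists y'.
apply: (vspanM hD) => //; apply: (vspan_sub hD) vz => w ws; by rewrite mem_cat ws.
Qed.

Lemma tclosure_adjoinM N x y : ideal D N -> D x -> D y -> N (x * y) ->
  tclosure D (adjoin N x) 1 -> tclosure D (adjoin N y) 1 -> tclosure D N 1.
Proof.
move=> iN Dx Dy Nxy [s1 [s1N v1]] [s2 [s2N v2]].
have [DN [_ [ND NM]]] := iN.
exists [seq a * b | a <- s1, b <- s2]; split; last first.
  by apply: (vspan_allpairs1 hD) => // z /s2N; apply: (ideal_adjoin iN Dy).1.
move=> _ /allpairsP[[a b] [/s1N[n [d [Nn [Dd ->]]]] /s2N[n' [d' [Nn' [Dd' ->]]]] ->]] /=.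
have -> : (n + d * x) * (n' + d' * y) = (n' + d' * y) * n + (d * n') * x + (d * d') * (x * y).
  by ring.
have Dn'y : D (n' + d' * y).
  by apply: (subringD hD); [apply: DN | apply: (subringM hD)].
apply: (ND); last by apply: (NM) => //; apply: (subringM hD).
by apply: (ND); [apply: (NM) | rewrite mulrC; apply: (NM) => //; apply: (NM)].
Qed.

Lemma chain_seq_bounded (F : set (set L)) (s : seq L) :
  (exists J, F J) -> total_on F subset ->
  (forall y, y \in s -> (\bigcup_(J in F) J)%classic y) ->
  exists2 J, F J & forall y, y \in s -> J y.
Proof.
move=> [J0 FJ0] Ftot; elim: s => [|a s IH] sF; first by exists J0.
have [J FJ sJ] := IH (fun y ys => sF y (@mem_behead _ (a :: s) y ys)).
have [K FK Ka] := sF a (mem_head a s).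
have [JK|KJ] := Ftot J K FJ FK.
  by exists K => // y /[1!inE] /orP[/eqP-> // | /sJ /JK].
by exists J => // y /[1!inE] /orP[/eqP-> | /sJ //]; apply: KJ.
Qed.

Lemma t_proper_bigcup (F : set (set L)) :
  (exists J, F J) -> total_on F subset -> (forall J, F J -> t_proper J) ->
  t_proper (\bigcup_(J in F) J)%classic.
Proof.
move=> [J0 FJ0] Ftot Fp.
have bounded := chain_seq_bounded (ex_intro _ J0 FJ0) Ftot.
split; last first.
  by move=> [s [sF vs]]; have [J /Fp[_ ntJ] sJ] := bounded s sF; apply: ntJ; exists s.
split; first by move=> y [J /Fp[[DJ _] _]]; apply: DJ.
split; first by exists J0 => //; have [[_ []]] := Fp J0 FJ0.
split=> [y z Fy Fz | d y Dd [J FJ Jy]]; last first.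
  by exists J => //; have [[_ [_ [_ JM]]] _] := Fp J FJ; apply: JM.
have [J FJ yzJ] : exists2 J, F J & forall w, w \in [:: y; z] -> J w.
  by apply: bounded => w; rewrite !inE => /orP[] /eqP->.
exists J => //; have [[_ [_ [JD _]]] _] := Fp J FJ.
by apply: JD; apply: yzJ; rewrite !inE eqxx ?orbT.
Qed.

Lemma t_proper_maximal I : t_proper I ->
  exists N, [/\ t_proper N, I `<=` N &
    forall J, t_proper J -> N `<=` J -> J `<=` N]%classic.
Proof.
(* set0 is admitted in P because Zorn_bigcup also bounds the empty chain by its union. *)
move=> pI; pose P J := J = set0 \/ (t_proper J /\ (I `<=` J)%classic).
have [N [PN maxN]] : exists N, P N /\ forall J, (N `<` J)%classic -> ~ P J.
  apply: Zorn_bigcup => F FP Ftot.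
  have [[y [J FJ Jy]] | empty] := EM (exists y, (\bigcup_(J in F) J)%classic y); last first.
    by left; apply/seteqP; split=> // y Fy; apply: empty; exists y.
  pose F' := (F `&` [set J | J != set0])%classic.
  have -> : (\bigcup_(J in F) J = \bigcup_(J in F') J)%classic.
    apply/seteqP; split=> [z [K FK Kz] | z [K [FK _] Kz]]; last by exists K.
    by exists K => //; split=> //; apply/set0P; exists z.
  have F'p K : F' K -> t_proper K /\ (I `<=` K)%classic.
    by move=> [/FP[-> /eqP // | //]].
  right; split.
    apply: t_proper_bigcup; [ | by move=> ? ? [? _] [? _]; apply: Ftot | by move=> K /F'p[]].
    by exists J; split=> //; apply/set0P; exists y.
  have F'J : F' J by split=> //; apply/set0P; exists y.
  by move=> z Iz; exists J => //; apply: (F'p J F'J).2.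
have I0 : I 0 by case: pI => [[_ []]].
case: PN => [N0 | [pN IN]].
  exfalso; apply: (maxN I); last by right; split.
  by rewrite N0; split; [exact: sub0set | move/(_ 0 I0)].
exists N; split=> // J pJ NJ z Jz; apply: contrapT => Nz.
by apply: (maxN J); [split=> // JN; exact: Nz (JN z Jz) | right; split=> // w /IN /NJ].
Qed.

Lemma t_maximal_prime_above I : t_proper I ->
  exists N, [/\ t_maximal D N, prime_ideal D N & I `<=` N]%classic.
Proof.
move=> /t_proper_maximal[N [[iN ntN] IN maxN]].
have N0 : N 0 by case: iN => [_ []].
have DN : forall z, N z -> D z by case: iN.
have outside z : D z -> ~ N z -> tclosure D (adjoin N z) 1.
  move=> Dz Nz; apply: contrapT => nt; apply: Nz.
  apply: (maxN (adjoin N z)); [ | exact: adjoin_l | exact: adjoin_r].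
  by split=> //; apply: ideal_adjoin.
have tN z : tclosure D N z -> N z.
  move=> tz; apply: (maxN (adjoin N z)); [ | exact: adjoin_l | exact: adjoin_r].
  split; first by apply/ideal_adjoin/(tclosure_subring iN tz).
  by move/(tclosure_adjoin iN tz).
have N1 : ~ N 1 by move/(tclosure_mem iN).
exists N; split=> //; last first.
  split; first by [].
  move=> x y Dx Dy Nxy; apply: contrapT => /not_orP[Nx Ny]; apply: ntN.
  exact: (tclosure_adjoinM iN Dx Dy Nxy (outside x Dx Nx) (outside y Dy Ny)).
split; first by [].
split; first by right=> z; split; [apply: tclosure_mem | apply: tN].
move=> J [iJ J1] [J0 | tJ] NJ z Jz; first by move: Jz => /J0->.
by apply: (maxN J) => //; split=> // /tJ.
Qed.

Lemma t_ideal_seq_avoid Q s : t_ideal D Q -> ~ Q 1 -> vspan D s 1 ->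
  (exists2 y, y \in s & y != 0) -> exists2 y, y \in s & ~ Q y.
Proof.
move=> tQ Q1 v1 [y0 y0s y0_neq0]; apply: contrapT => none.
have sQ y : y \in s -> Q y by move=> ys; apply: contrapT => Qy; apply: none; exists y.
case: tQ => [Q0 | tQ]; first by move/eqP: y0_neq0; apply; apply/Q0/sQ.
by apply: Q1; apply/tQ; exists s.
Qed.

End TMaximal.

Section Denominators.
Variables (L : fieldType) (D : L -> Prop).
Hypothesis hD : subring D.

Lemma common_denominator (S : L -> Prop) (ys : seq L) :
  S 1 -> (forall s t, S s -> S t -> S (s * t)) -> (forall s, S s -> D s) ->
  (forall y, y \in ys -> exists a s, [/\ D a, S s & y = a / s]) ->
  exists s, S s /\ forall y, y \in ys -> D (s * y).
Proof.
move=> S1 SM SD; elim: ys => [|y ys IH] ysS; first by exists 1.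
have [s [Ss sys]] := IH (fun z zs => ysS z (@mem_behead _ (y :: ys) z zs)).
have [a [b [Da Sb ->]]] := ysS y (mem_head y ys).
exists (s * b); split=> [|z]; first exact: SM.
rewrite inE => /orP[/eqP-> | /sys Dsz].
  have [->|b0] := eqVneq b 0; first by rewrite invr0 !mulr0; apply: (subring0 hD).
  by rewrite -mulrA [b * _]mulrC divfK //; apply: (subringM hD) => //; apply: SD.
by rewrite mulrAC; apply: (subringM hD) => //; apply: SD.
Qed.

Lemma localization_subring P : prime_ideal D P -> subring (localization D P).
Proof.
move=> [[[DP [P0 _]] P1] Pprime].
have nP_neq0 s : ~ P s -> s != 0 by apply: contra_not_neq => ->.
have nPM s t : D s -> D t -> ~ P s -> ~ P t -> ~ P (s * t).
  by move=> Ds Dt Ps Pt /Pprime[] // /[swap].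
have loc1 : localization D P 1.
  by exists 1, 1; rewrite divr1; split; [apply: (subring1 hD) | split; [apply: (subring1 hD) | ]].
split.
  by exists 0, 1; rewrite mul0r; split; [apply: (subring0 hD) | split; [apply: (subring1 hD) | ]].
split=> //; split=> x y [a [s [Da [Ds [Ps ->]]]]] [b [t [Db [Dt [Pt ->]]]]].
  exists (a * t - b * s), (s * t); split; first by apply: (subringB hD); apply: (subringM hD).
  split; [exact: (subringM hD) | split; [exact: nPM | field; apply/andP; split; exact: nP_neq0]].
exists (a * b), (s * t); split; first exact: (subringM hD).
by split; [exact: (subringM hD) | split; [exact: nPM | rewrite invfM mulrACA]].
Qed.

Lemma valuation_min_divisor (V : L -> Prop) (s : seq L) :
  subring V -> valuation_in (qf D) V -> (forall y, y \in s -> D y) ->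
  (exists2 c, c \in s & c != 0) ->
  exists c, [/\ c \in s, c != 0 & forall y, y \in s -> V (y / c)].
Proof.
move=> hV vV; elim: s => [|y s IH] Ds; first by case=> c0; rewrite in_nil.
move=> [c0 c0s c0_neq0].
have Ds' z : z \in s -> D z by move=> zs; apply/Ds/(@mem_behead _ (y :: s)).
have [y0|y_neq0] := eqVneq y 0.
  move: c0s; rewrite y0 inE => /orP[/eqP c0_0 | c0s]; first by rewrite c0_0 eqxx in c0_neq0.
  have [c [cs c_neq0 Vc]] := IH Ds' (ex_intro2 _ _ c0 c0s c0_neq0).
  exists c; split=> [||z]; rewrite ?inE ?cs ?orbT //.
  by move=> /orP[/eqP-> | /Vc //]; rewrite mul0r; apply: (subring0 hV).
have [[c cs c_neq0] | none] := EM (exists2 c, c \in s & c != 0); last first.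
  exists y; split=> [||z]; rewrite ?mem_head //.
  rewrite inE => /orP[/eqP-> | zs]; first by rewrite divff //; apply: (subring1 hV).
  have [->|z_neq0] := eqVneq z 0; first by rewrite mul0r; apply: (subring0 hV).
  by exfalso; apply: none; exists z.
have [c' [c's c'_neq0 Vc']] := IH Ds' (ex_intro2 _ _ c cs c_neq0).
have yc'_neq0 : y / c' != 0 by rewrite mulf_neq0 ?invr_eq0.
have [Vyc' | Vc'y] := vV _ (qf_div hD (Ds y (mem_head y s)) (Ds' c' c's)) yc'_neq0.
  exists c'; split=> [||z]; rewrite ?inE ?c's ?orbT //.
  by move=> /orP[/eqP-> // | /Vc' //].
exists y; split=> [||z]; rewrite ?mem_head //.
rewrite inE => /orP[/eqP-> | zs]; first by rewrite divff //; apply: (subring1 hV).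
have -> : z / y = (z / c') * (y / c')^-1 by field; apply/andP.
by apply: (subringM hV) => //; apply: Vc'.
Qed.

End Denominators.

Section ContentInverse.
Variables (L : fieldType) (A : L -> Prop) (q : {poly L}).
Hypotheses (hA : subring A) (Aq : forall i, A q`_i).

(* With c(q) the ideal generated by the coefficients of q, these are (A : c(q)) and
   c(q)(A : c(q)). *)
Definition content_inv w := qf A w /\ forall i, A (w * q`_i).

Definition content_prod z := exists wf : nat -> L,
  (forall i, content_inv (wf i)) /\ z = \sum_(i < size q) wf i * q`_i.

Lemma content_inv0 : content_inv 0.
Proof.
by split=> [|i]; rewrite ?mul0r; [apply/(qf_subring hA) | ]; apply: (subring0 hA).
Qed.

Lemma content_inv1 : content_inv 1.
Proof. by split=> [|i]; rewrite ?mul1r; [apply/(qf_subring hA)/(subring1 hA) | ]. Qed.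

Lemma content_invD w w' : content_inv w -> content_inv w' -> content_inv (w + w').
Proof.
move=> [qw Aw] [qw' Aw']; split=> [|i]; first exact: (qfD hA).
by rewrite mulrDl; apply: (subringD hA).
Qed.

Lemma content_invM d w : A d -> content_inv w -> content_inv (d * w).
Proof.
move=> Ad [qw Aw]; split=> [|i]; first exact/(qfM hA)/qw/(qf_subring hA).
by rewrite -mulrA; apply: (subringM hA).
Qed.

Lemma ideal_content_prod : ideal A content_prod.
Proof.
split; first by move=> _ [wf [Awf ->]]; apply: (subring_sum hA) => i _; apply: (Awf i).2.
split.
  by exists (fun=> 0); split=> [i | ]; [apply: content_inv0 | rewrite big1 // => i; rewrite mul0r].
split=> [_ _ [wf [Awf ->]] [wf' [Awf' ->]] | d _ Ad [wf [Awf ->]]].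
  exists (fun i => wf i + wf' i); split=> [i | ]; first exact: content_invD.
  by rewrite -big_split; apply: eq_bigr => i _; rewrite mulrDl.
exists (fun i => d * wf i); split=> [i | ]; first exact: content_invM.
by rewrite mulr_sumr; apply: eq_bigr => i _; rewrite mulrA.
Qed.

Lemma content_prod_coef w j : content_inv w -> (j < size q)%N -> content_prod (w * q`_j).
Proof.
move=> Aw ltjq; exists (fun i => if i == j then w else 0); split.
  by move=> i; case: eqP => _; [ | apply: content_inv0].
rewrite (bigD1 (Ordinal ltjq)) //= eqxx big1 ?addr0 // => i /eqP ne_ij.
by case: eqP => [eq_ij | _]; [case: ne_ij; apply: val_inj | rewrite mul0r].
Qed.

Lemma mem_coef_subring y : y \in (q : seq L) -> A y.
Proof. by move=> /(nthP 0)[i _ <-]; apply: Aq. Qed.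

(* With A_N a valuation ring, a coefficient c of minimal value gives S/c in (A : c(q)) for some S
   outside N, and then S = (S/c) c lies in c(q)(A : c(q)). *)
Lemma content_prod_not_in_t_maximal N : PvMD A -> q != 0 ->
  t_maximal A N -> prime_ideal A N -> ~ (forall z, content_prod z -> N z).
Proof.
move=> pA q_neq0 tN pN TN.
have [[[AN _] _] Nprime] := pN.
have [c [cq c_neq0 locq]] : exists c, [/\ c \in (q : seq L), c != 0 &
    forall y, y \in (q : seq L) -> localization A N (y / c)].
  apply: (valuation_min_divisor hA (localization_subring hA pN) (pA.2 N tN) mem_coef_subring).
  by exists (lead_coef q); rewrite ?lead_coef_eq0 // /lead_coef mem_nth // prednK ?size_poly_gt0.
have [S [[AS NS] AlocS]] : exists S, (A S /\ ~ N S) /\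
    forall y, y \in [seq y / c | y <- (q : seq L)] -> A (S * y).
  apply: (common_denominator hA) => [|s t [As Ns] [At Nt]|s [] //|_ /mapP[y /locq yc ->]].
  - by split; [apply: (subring1 hA) | case: pN => [[]]].
  - by split; [apply: (subringM hA) | case/Nprime].
  - by have [a [b [Aa [Ab [Nb ->]]]]] := yc; exists a, b.
have Sc_inv : content_inv (S / c).
  split=> [|i]; first exact: (qf_div hA) (mem_coef_subring cq).
  have [ltiq | leqi] := ltnP i (size q); last by rewrite nth_default // mulr0; apply: (subring0 hA).
  by rewrite mulrAC -mulrA; apply/AlocS/map_f/mem_nth.
apply: NS; have -> : S = S / c * q`_(index c q) by rewrite nth_index // divfK.
by apply/TN/content_prod_coef => //; rewrite index_mem.
Qed.

Lemma content_prod_tclosure1 : PvMD A -> q != 0 -> tclosure A content_prod 1.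
Proof.
move=> pA q_neq0; apply: contrapT => nt.
have [N [tN pN TN]] := t_maximal_prime_above hA (conj ideal_content_prod nt).
exact: (content_prod_not_in_t_maximal pA q_neq0 tN pN).
Qed.

Definition content_prod_gens (ws : seq L) := [seq w * q`_i | w <- ws, i <- iota 0 (size q)].

Lemma content_prod_seq (s : seq L) : (forall z, z \in s -> content_prod z) ->
  exists ws, (forall w, w \in ws -> content_inv w) /\
    forall z, z \in s -> vspan A (content_prod_gens ws) z.
Proof.
elim: s => [|z s IH] sT; first by exists [::].
have [ws [Aws vws]] := IH (fun y ys => sT y (@mem_behead _ (z :: s) y ys)).
have [wf [Awf ->]] := sT z (mem_head z s).
exists (mkseq wf (size q) ++ ws); split=> [w | y].
  by rewrite mem_cat => /orP[/mapP[i _ ->] // | /Aws].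
have gens_sub : {subset content_prod_gens ws <= content_prod_gens (mkseq wf (size q) ++ ws)}.
  move=> _ /allpairsP[[w i] [wws iq ->]]; apply/allpairsP; exists (w, i).
  by rewrite mem_cat wws orbT.
rewrite inE => /orP[/eqP-> | /vws]; last exact: (vspan_sub hA).
apply: big_ind => [|u v|i _]; [exact: (vspan0 hA) | exact: (vspanD hA) | ].
apply: (vspan_mem hA); last by apply: (Awf i).2.
apply/allpairsP; exists (wf i, val i); rewrite mem_cat mem_iota /= add0n ltn_ord.
by rewrite map_f ?mem_iota ?add0n ?ltn_ord.
Qed.

Lemma content_t_invertible : PvMD A -> q != 0 ->
  exists ws, [/\ 1 \in ws, forall w, w \in ws -> content_inv w &
    vspan A (content_prod_gens ws) 1].
Proof.
move=> pA q_neq0; have [s [sT v1]] := content_prod_tclosure1 pA q_neq0.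
have [ws [Aws vws]] := content_prod_seq sT.
exists (1 :: ws); split=> [|w|]; first exact: mem_head.
  by rewrite inE => /orP[/eqP-> | /Aws //]; apply: content_inv1.
apply: (vspan_trans hA) v1 => y /vws; apply: (vspan_sub hA).
move=> _ /allpairsP[[w i] [wws iq ->]]; apply/allpairsP; exists (w, i).
by rewrite inE wws orbT.
Qed.

End ContentInverse.

Lemma algebraic_poly_subring (L : fieldType) (A : L -> Prop) (x : L) :
  subring A -> algebraic_over (qf A) ->
  exists q : {poly L}, [/\ q != 0, forall i, A q`_i & root q x].
Proof.
move=> hA alg; have [p [p_neq0 [qfp px]]] := alg x.
have [d [[Ad d_neq0] Adp]] : exists d, (A d /\ d != 0) /\ forall y, y \in (p : seq L) -> A (d * y).
  apply: (common_denominator hA) => [|s t [As s0] [At t0]|s [] //|_ /(nthP 0)[i _ <-]].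
  - by split; [apply: (subring1 hA) | apply: oner_neq0].
  - by split; [apply: (subringM hA) | apply: mulf_neq0].
  - by have [a [b [Aa [Ab [b0 ->]]]]] := qfp i; exists a, b.
exists (d *: p); split; first by rewrite scale_poly_eq0 negb_or d_neq0.
  move=> i; rewrite coefZ; have [ltip | lepi] := ltnP i (size p); first exact/Adp/mem_nth.
  by rewrite nth_default // mulr0; apply: (subring0 hA).
by rewrite rootZ.
Qed.

Lemma horner_drop_polyS (L : fieldType) (p : {poly L}) (j : nat) (x : L) :
  (drop_poly j p).[x] = p`_j + x * (drop_poly j.+1 p).[x].
Proof.
have -> : drop_poly j p = drop_poly j.+1 p * 'X + (p`_j)%:P.
  apply/polyP => i; rewrite coefD coefC coefMX !coef_drop_poly.
  by case: i => [|i]; rewrite ?add0r ?addr0 //= addSnnS.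
by rewrite hornerMXaddC addrC mulrC.
Qed.

Lemma horner_drop_poly_root (L : fieldType) (p : {poly L}) (j : nat) (x : L) :
  x != 0 -> root p x -> (drop_poly j p).[x] = - \sum_(i < j) p`_i * x^-1 ^+ (j - i).
Proof.
move=> x_neq0 /eqP px0.
have := congr1 (horner^~ x) (poly_take_drop j p).
rewrite hornerD hornerM hornerXn px0 => /eqP; rewrite addrC addr_eq0.
move=> /eqP/(congr1 (fun t => t / x ^+ j)).
rewrite mulfK ?expf_neq0 // => ->; rewrite mulNr (horner_coef_wide _ (size_take_poly j p)).
congr (- _); rewrite mulr_suml; apply: eq_bigr => i _.
rewrite coef_take_poly ltn_ord -mulrA; congr (_ * _).
have le_ij : (i <= j)%N := ltnW (ltn_ord i).
rewrite -[in x ^+ j](subnK le_ij) exprD invfM mulrCA divff ?expf_neq0 // mulr1.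
by rewrite exprVn.
Qed.

Section ValuationRing.
Variables (L : fieldType) (V : L -> Prop).
Hypotheses (hV : subring V) (vV : forall z, z != 0 -> V z \/ V z^-1).

Lemma valuation_drop_poly_root (p : {poly L}) (j : nat) (x : L) :
  (forall i, V p`_i) -> root p x -> V (drop_poly j p).[x].
Proof.
move=> Vp px; have [x0 | x_neq0] := eqVneq x 0.
  by apply: (horner_subring hV) => [i | ]; rewrite ?coef_drop_poly ?x0 //; apply: (subring0 hV).
have [Vx | Vx'] := vV x_neq0.
  by apply: (horner_subring hV) => // i; rewrite coef_drop_poly.
rewrite horner_drop_poly_root //; apply/(subringN hV)/(subring_sum hV) => i _.
by apply: (subringM hV) => //; apply: (subringX hV).
Qed.

Lemma valuation_unit_cancel (y u : L) :
  V y -> ~ val_max_ideal V y -> V (u * y) -> V u.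
Proof.
move=> Vy nmy Vuy; have y_neq0 : y != 0 by apply/eqP => y0; apply: nmy; split=> //; left.
have Vy' : V y^-1 by apply: contrapT => nVy'; apply: nmy; split=> //; right.
by rewrite -(mulfK y_neq0 u); apply: (subringM hV).
Qed.

End ValuationRing.

(* The tail t_j := (drop_poly j r).[x] = r_j + r_(j+1) x + r_(j+2) x^2 + ... satisfies
   r_j = t_j - x t_(j+1). *)
Definition tails (L : fieldType) (x : L) (rs : seq {poly L}) (n : nat) :=
  [seq (drop_poly j r).[x] | r <- rs, j <- iota 0 n] ++
  [seq x * (drop_poly j.+1 r).[x] | r <- rs, j <- iota 0 n].

Lemma colon_tails_coef (L : fieldType) (D : L -> Prop) (x : L) (rs : seq {poly L})
    (n : nat) (u : L) (r : {poly L}) (j : nat) : subring D ->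
  (forall t, t \in tails x rs n -> D (u * t)) -> r \in rs -> (j < n)%N -> D (u * r`_j).
Proof.
move=> hD Dut rrs ltjn; have jn : j \in iota 0 n by rewrite mem_iota.
have -> : r`_j = (drop_poly j r).[x] - x * (drop_poly j.+1 r).[x].
  by rewrite horner_drop_polyS addrK.
rewrite mulrBr; apply: (subringB hD); apply: Dut; rewrite mem_cat.
  by apply/orP; left; apply/allpairsP; exists (r, j).
by apply/orP; right; apply/allpairsP; exists (r, j).
Qed.

Lemma not_localization_mem (L : fieldType) (D M : L -> Prop) (x a : L) :
  ideal D M -> D a -> D (x * a) ->
  ~ localization D M x -> ~ localization D M x^-1 -> M a /\ M (x * a).
Proof.
move=> [_ [M0 _]] Da Dxa nMx nMx'.
have neq0 t : ~ M t -> t != 0 by apply: contra_not_neq => ->.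
split; apply: contrapT => Mt.
  by apply: nMx; exists (x * a), a; rewrite mulfK ?neq0.
have a_neq0 : a != 0 by apply: contra_neq (neq0 _ Mt) => ->; rewrite mulr0.
by apply: nMx'; exists a, (x * a); rewrite invfM mulrCA mulfV ?mulr1.
Qed.

Lemma essential_representationP (L : fieldType) (B : L -> Prop) Vs :
  (forall x, qf B x) -> essential_representation B Vs ->
  [/\ forall V, Vs V -> subring V,
      forall V, Vs V -> forall z, z != 0 -> V z \/ V z^-1,
      forall V z, Vs V -> B z -> V z &
      forall z, (forall V, Vs V -> V z) -> B z].
Proof.
move=> qB [VsE Brep].
split=> [V /VsE[[]] // | V /VsE[[_ [_ [_ vV]]] _] z | V z /VsE[[_ [BV _]] _] | z Vz].
- by apply: vV.
- exact: BV.
- by apply/Brep; split.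
Qed.

Section Intersection.
Variables (L : fieldType) (B : L -> Prop) (Vs : (L -> Prop) -> Prop).
Hypotheses (hB : subring B) (hVs : forall V, Vs V -> subring V).
Hypothesis vVs : forall V, Vs V -> forall z, z != 0 -> V z \/ V z^-1.
Hypotheses (BV : forall V z, Vs V -> B z -> V z) (capB : forall z, (forall V, Vs V -> V z) -> B z).

Lemma intersection_drop_poly_root (r : {poly L}) (x : L) (j : nat) :
  (forall i, B r`_i) -> root r x -> B (drop_poly j r).[x].
Proof.
move=> Br rx; apply: capB => V VsV.
by apply: (valuation_drop_poly_root (hVs VsV) (vVs VsV)) => // i; apply: BV.
Qed.

Lemma tails_in_ideal (M : L -> Prop) (x : L) (rs : seq {poly L}) (n : nat) : ideal B M ->
  (forall r, r \in rs -> (forall i, B r`_i) /\ root r x) ->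
  ~ localization B M x -> ~ localization B M x^-1 ->
  forall t, t \in tails x rs n -> M t.
Proof.
move=> iM rsB nMx nMx'.
have Mtail r k : r \in rs -> M (drop_poly k r).[x] /\ M (x * (drop_poly k r).[x]).
  move=> /rsB[Br rx]; apply: (not_localization_mem iM) => //.
    exact: intersection_drop_poly_root.
  case: k => [|k]; first by rewrite drop_poly0l (rootP rx) mulr0; apply: (subring0 hB).
  have -> : x * (drop_poly k.+1 r).[x] = (drop_poly k r).[x] - r`_k.
    by rewrite [(drop_poly k r).[x]]horner_drop_polyS addrC addKr.
  by apply: (subringB hB) => //; apply: intersection_drop_poly_root.
move=> t; rewrite mem_cat => /orP[] /allpairsP[[r j] [rrs _ ->]] /=.
  by have [] := Mtail r j rrs.
by have [] := Mtail r j.+1 rrs.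
Qed.

End Intersection.

Lemma localization_ideal0 (L : fieldType) (D M : L -> Prop) (x : L) :
  qf D x -> (forall y, M y <-> y = 0) -> localization D M x.
Proof.
move=> [a [b [Da [Db [b_neq0 ->]]]]] M0.
by exists a, b; do !split=> //; move/M0/eqP; rewrite (negbTE b_neq0).
Qed.

(* The center A ∩ m_V is a proper t-ideal of A, so it misses one of the generators w q_j
   of c(q)(A : c(q)); that generator is a unit of V and u times it lies in V. *)
Lemma valuation_colon_tails (L : fieldType) (A V : L -> Prop) (q : {poly L})
    (ws : seq L) (x u : L) :
  subring V -> (forall y, A y -> V y) -> t_ideal A (fun y => A y /\ val_max_ideal V y) ->
  q != 0 -> 1 \in ws -> (forall w, w \in ws -> content_inv A q w) ->
  vspan A (content_prod_gens q ws) 1 ->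
  (forall t, t \in tails x [seq w *: q | w <- ws] (size q) -> V (u * t)) -> V u.
Proof.
move=> hV AV tQ q_neq0 ws1 Aws vws Vu.
have nQ1 : ~ (A 1 /\ val_max_ideal V 1).
  by move=> [_ [_ [/eqP | []]]]; rewrite ?oner_eq0 // invr1; apply: (subring1 hV).
have lead_gen : exists2 y, y \in content_prod_gens q ws & y != 0.
  exists (1 * lead_coef q); last by rewrite mul1r lead_coef_eq0.
  apply/allpairsP; exists (1, (size q).-1).
  by split=> //; rewrite mem_iota add0n ltn_predL size_poly_gt0.
have [_ /allpairsP[[w i] [wws iq ->]] /= nQ] := t_ideal_seq_avoid tQ nQ1 vws lead_gen.
have Awq := (Aws w wws).2 i.
apply: (valuation_unit_cancel hV (AV _ Awq) (fun m => nQ (conj Awq m))).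
rewrite -coefZ; apply: (colon_tails_coef hV Vu); first exact: map_f.
by move: iq; rewrite mem_iota.
Qed.

Theorem corollary2p11 (L : fieldType) (A B : L -> Prop) :
  subring A -> subring B ->
  (forall x, A x -> B x) ->
  (forall x : L, qf B x) ->
  algebraic_over (qf A) ->
  PvMD A ->
  integrally_closed B ->
  essential_domain B ->
  forall Vs : (L -> Prop) -> Prop,
    essential_representation B Vs ->
    (forall V, Vs V -> t_ideal A (fun x => A x /\ val_max_ideal V x)) ->
    PvMD B.
Proof.
move=> hA hB AB qB alg pA _ _ Vs rep Vt.
have [hVs vVs BV capB] := essential_representationP qB rep.
split=> // M tM x _ x_neq0.
have [[iM M1] [[M0 | tM1] _]] := tM; first by left; apply: localization_ideal0.
have [q [q_neq0 Aq qx]] := algebraic_poly_subring x hA alg.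
have [ws [ws1 Aws vws]] := content_t_invertible hA Aq pA q_neq0.
have rsB r : r \in [seq w *: q | w <- ws] -> (forall i, B r`_i) /\ root r x.
  move=> /mapP[w /Aws[_ Aw] ->]; split=> [i | ]; first by rewrite coefZ; apply/AB/Aw.
  by rewrite rootE hornerZ (rootP qx) mulr0.
apply: contrapT => /not_orP[nMx nMx']; apply: M1; apply/tM1.
exists (tails x [seq w *: q | w <- ws] (size q)).
split; first exact: (tails_in_ideal hB hVs vVs BV capB).
split=> // u /(colon_fgE hB)[_ Bu]; rewrite mul1r; apply: capB => V VsV.
apply: (valuation_colon_tails (hVs V VsV) _ (Vt V VsV) q_neq0 ws1 Aws vws).
  by move=> y /AB; apply: BV.
by move=> t /Bu; apply: BV.
Qed.
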